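(* Let $X$ be a finite discrete space with at least two elements, $\Gamma$ a nonempty countable set, $\varphi:\Gamma\to\Gamma$ a map. If $(X^\Gamma,\sigma_\varphi)$ is dense distributional chaotic, then $\varphi$ has no periodic point.
   Context: $X^\Gamma$ has the product topology and a fixed compatible metric $d$; $\sigma_\varphi((x_\alpha)_{\alpha\in\Gamma})=(x_{\varphi(\alpha)})_{\alpha\in\Gamma}$. With $f=\sigma_\varphi$, $\xi(x,y,t,n)=\#\{i\in\{0,\dots,n-1\}:d(f^i(x),f^i(y))<t\}$, $F_{xy}(t)=\liminf_n\xi(x,y,t,n)/n$, $F^*_{xy}(t)=\limsup_n\xi(x,y,t,n)/n$. The system is dense distributional chaotic if there exist a dense uncountable set $A\subseteq X^\Gamma$ and $\varepsilon>0$ such that for all distinct $x,y\in A$: $F^*_{xy}(s)=1$ for every $s>0$ and $F_{xy}(\varepsilon)=0$. *)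

From HB Require Import structures.
From mathcomp Require Import all_boot all_order all_algebra.
From mathcomp Require Import all_classical all_reals all_analysis.
Set Implicit Arguments. Unset Strict Implicit. Unset Printing Implicit Defensive.
Import Order.TTheory GRing.Theory Num.Theory.
Local Open Scope classical_set_scope.
Local Open Scope ring_scope.

Definition shift_space (Gamma : Type) (X : choiceType) : topologicalType :=
  {ptws Gamma -> discrete_topology X}.

Definition sigma_phi (Gamma : Type) (X : choiceType) (phi : Gamma -> Gamma)
  (x : shift_space Gamma X) : shift_space Gamma X := fun a => x (phi a).

Definition is_metric (R : realType) (T : Type) (d : T -> T -> R) : Prop :=
  [/\ forall x y, 0 <= d x y,
      forall x y, d x y = 0 <-> x = y,
      forall x y, d x y = d y x &
      forall x y z, d x z <= d x y + d y z].

Definition compatible_metric (R : realType) (T : topologicalType)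
  (d : T -> T -> R) : Prop :=
  is_metric d /\
  forall A : set T, open A <->
    (forall x, A x -> exists2 e : R, 0 < e & [set y | d x y < e] `<=` A).

Definition xi (R : realType) (T : Type) (d : T -> T -> R) (f : T -> T)
  (x y : T) (t : R) (n : nat) : nat :=
  #|[set i : 'I_n | `[< d (iter i f x) (iter i f y) < t >] ]|.

Definition F_low (R : realType) (T : Type) (d : T -> T -> R) (f : T -> T)
  (x y : T) (t : R) : R :=
  limn_inf (fun n => (xi d f x y t n)%:R / n%:R).
Definition F_up (R : realType) (T : Type) (d : T -> T -> R) (f : T -> T)
  (x y : T) (t : R) : R :=
  limn_sup (fun n => (xi d f x y t n)%:R / n%:R).

Definition dense_distributional_chaotic (R : realType) (T : topologicalType)
  (d : T -> T -> R) (f : T -> T) : Prop :=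
  exists (A : set T) (eps : R),
    [/\ dense A, ~ countable A, 0 < eps &
      forall x y, A x -> A y -> x <> y ->
        (forall s : R, 0 < s -> F_up d f x y s = 1) /\ F_low d f x y eps = 0].

Definition has_periodic_point (Gamma : Type) (phi : Gamma -> Gamma) : Prop :=
  exists (g : Gamma) (n : nat), (0 < n)%N /\ iter n phi g = g.

(** Let [g] be a periodic point of [phi] of period [n] and let [x], [y] be
    two points of the dense set [A] that differ at the coordinate [g]. Every
    point [c] of the orbit of [g] is sent back to [g] by some iterate of
    [phi], so [sigma_phi^i x] and [sigma_phi^i y] always differ somewhere on
    this finite orbit. Agreement on a finite set of coordinates is an open
    equivalence relation, hence, [X^Gamma] being compact, it holds for all
    pairs at [d]-distance less than some [s > 0]. Thus the orbits of [x] and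
    [y] never come [s]-close and [F*_xy(s) = 0], contradicting [F*_xy(s) = 1]. *)
From HB Require Import structures.
From mathcomp Require Import all_boot all_order all_algebra.
From mathcomp Require Import all_classical all_reals all_analysis.
From mathcomp Require Import lra.
Set Implicit Arguments.
Unset Strict Implicit.
Unset Printing Implicit Defensive.
Import Order.TTheory GRing.Theory Num.Theory.
Local Open Scope classical_set_scope.
Local Open Scope ring_scope.

Lemma iter_mod_period (T : Type) (f : T -> T) (x : T) (n : nat) :
  iter n f x = x -> forall k, iter k f x = iter (k %% n)%N f x.
Proof.
move=> fnx k; rewrite {1}(divn_eq k n) addnC iterD iterM.
by rewrite (iter_fix _ fnx).
Qed.

Lemma periodic_iter_preimage (T : eqType) (f : T -> T) (x : T) (n : nat) :
  (0 < n)%N -> iter n f x = x ->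
  forall i, exists2 c, c \in traject f x n & iter i f c = x.
Proof.
move=> n_gt0 fnx i; exists (iter ((n - i %% n) %% n)%N f x).
  by apply/trajectP; exists ((n - i %% n) %% n)%N; rewrite ?ltn_mod.
rewrite -iterD (iter_mod_period fnx) modnDmr -modnDml subnKC.
  by rewrite modnn.
by rewrite ltnW ?ltn_mod.
Qed.

Section Metric.
Variables (R : realType) (T : topologicalType) (d : T -> T -> R).
Hypothesis d_compat : compatible_metric d.

Lemma open_ball_compatible (u : T) (r : R) : open [set v | d u v < r].
Proof.
have [[_ _ _ d_triangle] d_open] := d_compat.
apply/d_open => v /= duv; exists (r - d u v); first by rewrite subr_gt0.
by move=> w /= dvw; have := d_triangle u v w; lra.
Qed.

(* A Lebesgue number argument for the cover of [T] by the fibres of [k]. *)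
Lemma compact_locally_constant_uniform (K : Type) (k : T -> K) :
  compact [set: T] -> (forall u, open [set v | k v = k u]) ->
  exists2 s : R, 0 < s & forall u v, d u v < s -> k u = k v.
Proof.
have [[_ d_refl _ d_triangle] d_open] := d_compat.
move=> T_compact k_open.
have := proj1 (compact_near_coveringP _) T_compact nat \oo
  (fun m u => forall v, d u v < m.+1%:R^-1 -> k u = k v) _.
case; last first.
  move=> N _ HN; exists N.+1%:R^-1; first by rewrite invr_gt0 ltr0n.
  by move=> u v; apply: (HN N (leqnn N) u I).
move=> x _.
have [e e_gt0 ball_fibre] := proj1 (d_open _) (k_open x) x erefl.
have e2_gt0 : 0 < e / 2 by lra.
exists ([set x' | d x x' < e / 2], [set m : nat | m.+1%:R^-1 < e / 2]) => /=.
  split; last exact: (near_infty_natSinv_lt (PosNum e2_gt0)).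
  apply: open_nbhs_nbhs; split; first exact: open_ball_compatible.
  by rewrite /= (proj2 (d_refl x x) erefl).
case=> x' m /= [dxx' me] v dx'v.
have kx' : k x' = k x by apply: ball_fibre => /=; lra.
rewrite kx'; apply/esym/ball_fibre => /=.
have := d_triangle x x' v; have := lt_trans dx'v me; lra.
Qed.

End Metric.

Lemma shift_space_compact (Gamma : eqType) (X : finType) :
  compact [set: shift_space Gamma X].
Proof.
have X_compact (c : Gamma) : compact [set: discrete_topology X].
  by apply: finite_compact; exact: (@finite_finset X setT).
have := tychonoff X_compact; set S := (S in compact S -> _).
by suff -> : S = setT by []; rewrite eqEsubset.
Qed.

Lemma open_coord_fibre (Gamma : eqType) (X : choiceType) (c : Gamma) (a : X) :
  open [set v : shift_space Gamma X | v c = a].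
Proof.
have proj_cont : continuous (fun v : shift_space Gamma X =>
    (v c : discrete_topology X)).
  exact: (@proj_continuous Gamma (fun _ => discrete_topology X) c).
exact: (proj1 (continuousP _) proj_cont [set a] (discrete_open _)).
Qed.

Lemma open_map_fibre (Gamma : eqType) (X : choiceType) (cs : seq Gamma)
    (u : shift_space Gamma X) :
  open [set v : shift_space Gamma X | map v cs = map u cs].
Proof.
elim: cs => [|c cs IH] /=.
  suff -> : [set v : shift_space Gamma X | [::] = [::] :> seq X] = setT.
    exact: openT.
  by apply/seteqP; split => // v.
suff -> : [set v : shift_space Gamma X | v c :: map v cs = u c :: map u cs] =
    [set v | v c = u c] `&` [set v | map v cs = map u cs].
  exact: openI (open_coord_fibre _ _) IH.
by apply/seteqP; split => v /= [-> ->].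
Qed.

Lemma dense_coord_fibre (Gamma : eqType) (X : choiceType) (c : Gamma) (a : X)
    (A : set (shift_space Gamma X)) :
  dense A -> exists2 x, A x & x c = a.
Proof.
move=> A_dense.
have fibre_n0 : [set v : shift_space Gamma X | v c = a] !=set0.
  by exists (fun=> a).
have [x [xa Ax]] := A_dense _ fibre_n0 (open_coord_fibre c a).
by exists x.
Qed.

Lemma iter_sigma_phi (Gamma : Type) (X : choiceType) (phi : Gamma -> Gamma)
    (x : shift_space Gamma X) (i : nat) (c : Gamma) :
  iter i (sigma_phi phi) x c = x (iter i phi c).
Proof. by elim: i c => [|i IH] c //=; rewrite /sigma_phi IH -iterSr. Qed.

Lemma limn_sup_cst (R : realType) (c : R) : limn_sup (fun _ : nat => c) = c.
Proof. rewrite cvg_limn_supE; last exact: is_cvg_cst. exact: lim_cst. Qed.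

Lemma F_up_eq0 (R : realType) (T : Type) (d : T -> T -> R) (f : T -> T)
    (x y : T) (t : R) :
  (forall i, t <= d (iter i f x) (iter i f y)) -> F_up d f x y t = 0.
Proof.
move=> far.
have xi0 N : xi d f x y t N = 0%N.
  apply: eq_card0 => i; apply/negP; rewrite in_setE /= => /asboolP close.
  by rewrite ltNge far in close.
rewrite /F_up -[RHS](limn_sup_cst 0); congr limn_sup.
by apply/funext => N; rewrite xi0 mul0r.
Qed.

Theorem lemma4p1 (R : realType) (X : finType) (Gamma : countType)
  (phi : Gamma -> Gamma)
  (d : shift_space Gamma X -> shift_space Gamma X -> R) :
  (1 < #|X|)%N ->
  (exists g : Gamma, True) ->
  compatible_metric d ->
  dense_distributional_chaotic d (sigma_phi phi) ->
  ~ has_periodic_point phi.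
Proof.
move=> X_gt1 _ d_compat [A [eps [A_dense _ _ A_chaotic]]] [g [n [n_gt0 phi_n_g]]].
have [a [b [_ _ a_neq_b]]] := card_gt1P X_gt1.
pose orbit := traject phi g n.
have [s s_gt0 close_agree] := compact_locally_constant_uniform d_compat
  (@shift_space_compact Gamma X) (open_map_fibre orbit).
have [x Ax xg] := dense_coord_fibre g a A_dense.
have [y Ay yg] := dense_coord_fibre g b A_dense.
have x_neq_y : x <> y by move=> xy; move: a_neq_b; rewrite -xg -yg xy eqxx.
have [F_up_x_y _] := A_chaotic x y Ax Ay x_neq_y.
have : F_up d (sigma_phi phi) x y s = 0.
  apply: F_up_eq0 => i; rewrite leNgt; apply/negP => /close_agree /eq_in_map agree.
  have [c c_orbit phi_i_c] := periodic_iter_preimage n_gt0 phi_n_g i.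
  move: (agree c c_orbit); rewrite !iter_sigma_phi phi_i_c xg yg => ab.
  by move: a_neq_b; rewrite ab eqxx.
by rewrite F_up_x_y // => /eqP; rewrite oner_eq0.
Qed.
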